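(* Let $bTL_n(q)$ be the quotient of $bH_n(q)$ by the two-sided ideal generated by the Steinberg elements $z_{i,j}=e_ie_j(1+qz_i+qz_j+q^2z_iz_j+q^2z_jz_i+q^3z_iz_jz_i)$, $|i-j|=1$, and put $d_i=q^{-1}e_i+z_i$. Then $bTL_n(q)$ is presented by generators $e_1,\ldots,e_{n-1}$ and $d_1,\ldots,d_{n-1}$ subject to: $e_i^2=e_i$, $e_ie_j=e_je_i$; $d_i^2=(q+q^{-1})d_i$; $d_id_jd_i=e_jd_ie_j$ for $|i-j|=1$; $d_id_j=d_jd_i$ for $|i-j|>1$; $d_ie_i=d_i$; $d_ie_j=e_jd_i$ for all $i,j$.
   Context: $\mathbb{S}=\mathbb{C}[q,q^{-1}]$. The tied--boxed Hecke algebra $bH_n(q)$ is the $\mathbb{S}$--algebra presented by generators $e_1,\dots,e_{n-1}$, $z_1,\dots,z_{n-1}$ and relations: $e_i^2=e_i$, $e_ie_j=e_je_i$; $z_iz_jz_i=z_jz_iz_j$ if $|i-j|=1$, $z_iz_j=z_jz_i$ if $|i-j|>1$; $e_iz_i=z_i$; $e_iz_j=z_je_i$; $z_i^2=e_i+(q-q^{-1})z_i$. *)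

From HB Require Import structures.
From mathcomp Require Import all_boot all_order all_algebra.
Set Implicit Arguments. Unset Strict Implicit. Unset Printing Implicit Defensive.
Import GRing.Theory.
Local Open Scope ring_scope.

(* Indices i = 1..n-1 of the paper are represented 0-based by 'I_(n.-1). *)
Definition adj (i j : nat) : bool := (i.+1 == j) || (j.+1 == i).
Definition far (i j : nat) : bool := (i.+1 < j)%N || (j.+1 < i)%N.

Section Rels.
Variables (R : comUnitRingType) (q : R) (n : nat).
Notation I := 'I_(n.-1).

Definition bH_rel (A : algType R) (e z : I -> A) : Prop :=
  ((forall i, e i * e i = e i)
   /\ (forall i j, e i * e j = e j * e i)
   /\ (forall i j : I, adj i j -> z i * z j * z i = z j * z i * z j)
   /\ (forall i j : I, far i j -> z i * z j = z j * z i)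
   /\ (forall i, e i * z i = z i)
   /\ (forall i j, e i * z j = z j * e i)
   /\ (forall i, z i * z i = e i + (q - q^-1) *: z i)).

Definition steinberg (A : algType R) (e z : I -> A) (i j : I) : A :=
  e i * e j * (1 + q *: z i + q *: z j + (q ^+ 2) *: (z i * z j)
               + (q ^+ 2) *: (z j * z i) + (q ^+ 3) *: (z i * z j * z i)).

Definition bTL_rel (A : algType R) (e z : I -> A) : Prop :=
  bH_rel e z /\ (forall i j : I, adj i j -> steinberg e z i j = 0).

Definition bTLd_rel (A : algType R) (e d : I -> A) : Prop :=
  ((forall i, e i * e i = e i)
   /\ (forall i j, e i * e j = e j * e i)
   /\ (forall i, d i * d i = (q + q^-1) *: d i)
   /\ (forall i j : I, adj i j -> d i * d j * d i = e j * d i * e j)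
   /\ (forall i j : I, far i j -> d i * d j = d j * d i)
   /\ (forall i, d i * e i = d i)
   /\ (forall i j, d i * e j = e j * d i)).

Definition presented_by (B : algType R)
    (P : forall A : algType R, (I -> A) -> (I -> A) -> Prop) (x y : I -> B) : Prop :=
  P B x y /\
  forall (A : algType R) (a b : I -> A), P A a b ->
    (exists f : {lrmorphism B -> A}, forall i, f (x i) = a i /\ f (y i) = b i) /\
    (forall f g : {lrmorphism B -> A},
        (forall i, f (x i) = a i /\ f (y i) = b i) ->
        (forall i, g (x i) = a i /\ g (y i) = b i) -> f =1 g).

End Rels.

(* Write w_i := 1 + q z_i.  The tied relations give q d_i = e_i w_i, and since the e_i
   commute with all generators, q^3 d_i d_j d_i = e_i e_j w_i w_j w_i and
   q^3 e_j d_i e_j = q^2 e_i e_j w_i.  The Steinberg element is e_i e_j (w_i + w_i (q z_j) w_i),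
   and the quadratic relation (in either form) reads e_i w_i^2 = (1 + q^2) e_i w_i; together,
   q^3 (d_i d_j d_i - e_j d_i e_j) = z_{i,j}.  So the braid-like relation on the d_i is
   equivalent to the vanishing of the Steinberg elements, and the braid relation on the z_i
   becomes redundant because z_{i,j} - z_{j,i} = q^3 (z_i z_j z_i - z_j z_i z_j).  The other
   relations correspond one to one under the invertible change of generators
   d_i = q^-1 e_i + z_i, so both presentations define the same algebra. *)

From HB Require Import structures.
From mathcomp Require Import all_boot all_order all_algebra.
Set Implicit Arguments.
Unset Strict Implicit.
Import GRing.Theory.
Local Open Scope ring_scope.

Lemma unit_scalerI (R : comUnitRingType) (V : lmodType R) (c : R) :
  c \is a GRing.unit -> injective (GRing.scale c : V -> V).
Proof.
by move=> c_unit x y /(congr1 (GRing.scale c^-1)); rewrite !scalerA mulVr // !scale1r.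
Qed.

Section AlgebraFacts.
Variables (R : comUnitRingType) (A : algType R).

Lemma commrZ (c : R) (x y : A) : GRing.comm x y -> GRing.comm x (c *: y).
Proof. by rewrite /GRing.comm -scalerAl -scalerAr => ->. Qed.

Lemma commr_scaleD (a b : R) (x y u v : A) :
  GRing.comm x u -> GRing.comm x v -> GRing.comm y u -> GRing.comm y v ->
  GRing.comm (a *: x + y) (b *: u + v).
Proof.
move=> xu xv yu yv.
have comm_u : GRing.comm u (a *: x + y) by apply/commrD/commr_sym/yu/commrZ/commr_sym.
have comm_v : GRing.comm v (a *: x + y) by apply/commrD/commr_sym/yv/commrZ/commr_sym.
by apply/commrD/commr_sym/comm_v/commrZ/commr_sym.
Qed.

Lemma scalerM2 (c : R) (x y : A) : c^+2 *: (x * y) = c *: x * (c *: y).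
Proof. by rewrite -scalerAl -scalerAr scalerA expr2. Qed.

Lemma scalerM3 (c : R) (x y u : A) :
  c^+3 *: (x * y * u) = c *: x * (c *: y) * (c *: u).
Proof. by rewrite exprSr -scalerA scalerAr scalerAl scalerM2. Qed.

End AlgebraFacts.

Lemma adjC (i j : nat) : adj i j = adj j i.
Proof. by rewrite /adj orbC. Qed.

Section TiedGenerators.
Variables (R : comUnitRingType) (q : R) (A : algType R) (n : nat).
Variables (e z d : 'I_(n.-1) -> A).
Hypothesis q_unit : q \is a GRing.unit.
Hypothesis d_def : forall i, d i = q^-1 *: e i + z i.
Hypothesis e_idem : forall i, e i * e i = e i.
Hypothesis e_comm : forall i j, GRing.comm (e i) (e j).
Hypothesis ez_comm : forall i j, GRing.comm (e i) (z j).
Hypothesis ez_absorb : forall i, e i * z i = z i.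

Local Notation w i := (1 + q *: z i).

Lemma ed_comm i j : GRing.comm (e i) (d j).
Proof. by rewrite /GRing.comm d_def; apply/commrD/ez_comm/commrZ. Qed.

Lemma ew_comm i j : GRing.comm (e i) (w j).
Proof. exact/commrD/commrZ/ez_comm/commr1. Qed.

Lemma ed_absorb i : e i * d i = d i.
Proof. by rewrite d_def mulrDr -scalerAr e_idem ez_absorb. Qed.

Lemma de_absorb i : d i * e i = d i.
Proof. by rewrite -ed_comm ed_absorb. Qed.

Lemma scale_d i : q *: d i = e i * w i.
Proof.
by rewrite d_def scalerDr scalerA mulrV // scale1r mulrDr mulr1 -scalerAr ez_absorb.
Qed.

Lemma sqr_d_sub i :
  d i * d i - (q + q^-1) *: d i = z i * z i - (e i + (q - q^-1) *: z i).
Proof.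
have dz : d i * z i = q^-1 *: z i + z i * z i.
  by rewrite d_def mulrDl -scalerAl ez_absorb.
rewrite {2}d_def mulrDr -scalerAr de_absorb dz scalerDl scale_d mulrDr mulr1 -scalerAr.
rewrite ez_absorb [q^-1 *: d i + _]addrC opprD addrACA subrr addr0.
by rewrite scalerBl addrA opprB addrA [z i * z i + _]addrC.
Qed.

Lemma sqr_dP i :
  d i * d i = (q + q^-1) *: d i <-> z i * z i = e i + (q - q^-1) *: z i.
Proof.
split=> sqr_eq; apply: subr0_eq.
  by rewrite -sqr_d_sub sqr_eq subrr.
by rewrite sqr_d_sub sqr_eq subrr.
Qed.

Lemma e_sqr_w i :
  d i * d i = (q + q^-1) *: d i -> e i * (w i * w i) = (1 + q^+2) *: (e i * w i).
Proof.
move=> /(congr1 (GRing.scale (q^+2))).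
have -> : q^+2 *: (d i * d i) = e i * (w i * w i).
  rewrite expr2 -scalerA scalerAr scalerAl !scale_d.
  by rewrite -mulrA (mulrA (w i)) -(ew_comm i i) !mulrA e_idem.
have scalar : q^+2 * (q + q^-1) = (1 + q^+2) * q.
  by rewrite mulrDr mulrDl mul1r addrC expr2 mulrK.
by rewrite scalerA scalar -scalerA scale_d.
Qed.

Lemma scale_ddd i j : q^+3 *: (d i * d j * d i) = e i * e j * (w i * w j * w i).
Proof.
have ewew : GRing.comm (e i) (w i * e j * w j).
  by apply/commrM/ew_comm/commrM/e_comm/ew_comm.
rewrite scalerM3 !scale_d.
have -> : e i * w i * (e j * w j) * (e i * w i) = e i * (w i * e j * w j * e i) * w i.
  by rewrite !mulrA.
by rewrite -ewew !mulrA e_idem -(mulrA (e i)) -(ew_comm j i) mulrA.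
Qed.

Lemma scale_ede i j : q *: (e j * d i * e j) = e i * e j * w i.
Proof.
rewrite scalerAl scalerAr scale_d -!mulrA -(ew_comm j i) (mulrA (e i)) (e_comm i j).
by rewrite !mulrA e_idem e_comm.
Qed.

Lemma steinbergE i j :
  steinberg q e z i j = e i * e j * (w i + w i * (q *: z j) * w i).
Proof.
set a := q *: z i; set b := q *: z j.
have -> : (1 + a) * b * (1 + a) = b + a * b + (b * a + a * b * a).
  by rewrite mulrDl mul1r mulrDr mulr1 mulrDl.
by rewrite /steinberg !scalerM2 scalerM3 !addrA.
Qed.

Lemma steinberg_d i j : d i * d i = (q + q^-1) *: d i ->
  q^+3 *: (d i * d j * d i - e j * d i * e j) = steinberg q e z i j.
Proof.
move=> /e_sqr_w sqr_w.
have ee_sqr_w : e i * e j * (w i * w i) = (1 + q^+2) *: (e i * e j * w i).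
  by rewrite (e_comm i j) -!mulrA sqr_w -scalerAr.
rewrite scalerBr scale_ddd exprSr -scalerA scale_ede steinbergE.
rewrite [w i * w j]mulrDr mulr1 [(w i + _) * _]mulrDl.
rewrite [_ * (w i * w i + _)]mulrDr [_ * (w i + _)]mulrDr ee_sqr_w scalerDl scale1r.
by rewrite addrAC addrK.
Qed.

Lemma ee_absorb_zzz i j : e i * e j * (z i * z j * z i) = z i * z j * z i.
Proof.
rewrite -!mulrA (mulrA (e j)) (ez_comm j i) -mulrA (mulrA (e j)) ez_absorb.
by rewrite mulrA ez_absorb.
Qed.

Lemma steinberg_sub_braid i j : steinberg q e z i j - steinberg q e z j i
  = q^+3 *: (z i * z j * z i - z j * z i * z j).
Proof.
rewrite /steinberg !mulrDr -!scalerAr !ee_absorb_zzz (e_comm j i) mulr1.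
rewrite (addrAC (e i * e j)) (addrAC _ (q^+2 *: (e i * e j * (z i * z j)))).
by rewrite opprD addrACA subrr add0r scalerBr.
Qed.

End TiedGenerators.

Lemma bTL_to_bTLd (R : comUnitRingType) (q : R) (A : algType R) (n : nat)
    (e z : 'I_(n.-1) -> A) :
  q \is a GRing.unit -> bTL_rel q e z -> bTLd_rel q e (fun i => q^-1 *: e i + z i).
Proof.
move=> q_unit [[e_idem [e_comm [_ [z_far [ez_absorb [ez_comm z_sqr]]]]]] z_steinberg].
pose d i := q^-1 *: e i + z i; have d_def i : d i = q^-1 *: e i + z i by [].
have d_sqr i : d i * d i = (q + q^-1) *: d i.
  exact/(sqr_dP q_unit d_def e_idem e_comm ez_comm ez_absorb)/z_sqr.
have d_braid (i j : 'I_(n.-1)) : adj i j -> d i * d j * d i = e j * d i * e j.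
  move=> ij; apply/subr0_eq/(unit_scalerI (unitrX 3 q_unit)).
  rewrite scaler0 (steinberg_d q_unit d_def e_idem e_comm ez_comm ez_absorb j (d_sqr i)).
  exact: z_steinberg.
have d_far (i j : 'I_(n.-1)) : far i j -> GRing.comm (d i) (d j).
  move=> ij; apply: commr_scaleD; first exact: e_comm.
  - exact: ez_comm.
  - exact/commr_sym/ez_comm.
  - exact: z_far.
have de_comm i j : d i * e j = e j * d i.
  exact/commr_sym/(ed_comm d_def e_comm ez_comm).
have d_absorb := de_absorb d_def e_idem e_comm ez_comm ez_absorb.
by split.
Qed.

Lemma bTLd_to_bTL (R : comUnitRingType) (q : R) (A : algType R) (n : nat)
    (e d : 'I_(n.-1) -> A) :
  q \is a GRing.unit -> bTLd_rel q e d -> bTL_rel q e (fun i => - q^-1 *: e i + d i).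
Proof.
move=> q_unit [e_idem [e_comm [d_sqr [d_braid [d_far [de_absorb de_comm]]]]]].
pose z i := - q^-1 *: e i + d i.
have d_def i : d i = q^-1 *: e i + z i by rewrite /z scaleNr addNKr.
have comm_e_d i j : GRing.comm (e i) (d j) by exact/commr_sym/de_comm.
have ez_comm i j : GRing.comm (e i) (z j) by exact/commrD/comm_e_d/commrZ/e_comm.
have ez_absorb i : e i * z i = z i.
  by rewrite /z mulrDr -scalerAr e_idem comm_e_d de_absorb.
have z_steinberg (i j : 'I_(n.-1)) : adj i j -> steinberg q e z i j = 0.
  move=> ij.
  rewrite -(steinberg_d q_unit d_def e_idem e_comm ez_comm ez_absorb j (d_sqr i)).
  by rewrite d_braid // subrr scaler0.
have z_braid (i j : 'I_(n.-1)) : adj i j -> z i * z j * z i = z j * z i * z j.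
  move=> ij; apply/subr0_eq/(unit_scalerI (unitrX 3 q_unit)).
  rewrite scaler0 -(steinberg_sub_braid q e_comm ez_comm ez_absorb).
  by rewrite !z_steinberg ?subrr // adjC.
have z_far (i j : 'I_(n.-1)) : far i j -> GRing.comm (z i) (z j).
  move=> ij; apply: commr_scaleD; first exact: e_comm.
  - exact: comm_e_d.
  - exact/commr_sym/comm_e_d.
  - exact: d_far.
have z_sqr i : z i * z i = e i + (q - q^-1) *: z i.
  exact/(sqr_dP q_unit d_def e_idem e_comm ez_comm ez_absorb)/d_sqr.
by split.
Qed.

Unset Implicit Arguments.

Theorem proposition6p1 (R : comUnitRingType) (q : R) (hq : q \is a GRing.unit)
    (n : nat) (B : algType R) (e z : 'I_(n.-1) -> B) :
  presented_by (@bTL_rel R q n) e z ->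
  presented_by (@bTLd_rel R q n) e (fun i => q^-1 *: e i + z i).
Proof.
move=> [ez_rel ez_univ]; split; first exact: bTL_to_bTLd hq ez_rel.
move=> A a b ab_rel.
have [[f f_gen] f_uniq] := ez_univ A a _ (bTLd_to_bTL hq ab_rel).
have lrmorph_shift (g : {lrmorphism B -> A}) c i :
    g (c *: e i + z i) = c *: g (e i) + g (z i).
  by rewrite raddfD /= linearZ.
split.
  exists f => i; have [fe fz] := f_gen i.
  by rewrite lrmorph_shift fe fz scaleNr addNKr.
have gen_z (g : {lrmorphism B -> A}) :
    (forall i, g (e i) = a i /\ g (q^-1 *: e i + z i) = b i) ->
    forall i, g (e i) = a i /\ g (z i) = - q^-1 *: a i + b i.
  move=> g_gen i; have [ge gd] := g_gen i; split=> //.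
  by rewrite -gd lrmorph_shift ge scaleNr addKr.
move=> g g' /gen_z g_gen /gen_z g'_gen; exact: f_uniq g g' g_gen g'_gen.
Qed.
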